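(* Let $ABC$ be a triangle with incenter $I$ and orthocenter $H$, and let $H_A, H_B, H_C$ be the orthocenters of the triangles $BIC$, $CIA$, $AIB$ respectively. Let $O_A, O_B, O_C$ be the circumcenters of the triangles $AH_BH_C$, $BH_CH_A$, $CH_AH_B$ respectively. Then $H$ is the orthocenter of triangle $O_AO_BO_C$, and $I$ is the Euler reflection point of triangle $O_AO_BO_C$.
   Context: The Euler reflection point of a (non-equilateral) triangle is the common point of the reflections of its Euler line in the three sidelines of the triangle. *)

From HB Require Import structures.
From mathcomp Require Import all_boot all_order all_algebra.
Set Implicit Arguments. Unset Strict Implicit. Unset Printing Implicit Defensive.
Import Order.TTheory GRing.Theory Num.Theory.
Local Open Scope ring_scope.

Section Geometry.
Variable R : rcfType.
Definition point := (R * R)%type.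

Definition padd (P Q : point) : point := (P.1 + Q.1, P.2 + Q.2).
Definition psub (P Q : point) : point := (P.1 - Q.1, P.2 - Q.2).
Definition pscale (k : R) (P : point) : point := (k * P.1, k * P.2).
Definition dot (u v : point) : R := u.1 * v.1 + u.2 * v.2.
Definition cross (u v : point) : R := u.1 * v.2 - u.2 * v.1.
Definition dist2 (P Q : point) : R := dot (psub P Q) (psub P Q).
Definition dist (P Q : point) : R := Num.sqrt (dist2 P Q).

Definition collinear (P Q X : point) : Prop := cross (psub Q P) (psub X P) = 0.

Definition triangle (A B C : point) : Prop := ~ collinear A B C.

Definition dist_line (X P Q : point) : R :=
  `|cross (psub Q P) (psub X P)| / dist P Q.

Definition strictly_inside (X A B C : point) : Prop :=
  exists a b c : R, [/\ 0 < a, 0 < b, 0 < c, a + b + c = 1 &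
     X = padd (pscale a A) (padd (pscale b B) (pscale c C))].

Definition is_incenter (A B C I : point) : Prop :=
  triangle A B C /\ strictly_inside I A B C /\
  dist_line I B C = dist_line I C A /\ dist_line I C A = dist_line I A B.

Definition is_orthocenter (A B C H : point) : Prop :=
  [/\ dot (psub H A) (psub C B) = 0,
      dot (psub H B) (psub A C) = 0 &
      dot (psub H C) (psub B A) = 0].

Definition is_circumcenter (A B C O : point) : Prop :=
  dist2 O A = dist2 O B /\ dist2 O B = dist2 O C.

Definition centroid (A B C : point) : point :=
  pscale (3%:R^-1) (padd A (padd B C)).

Definition equilateral (A B C : point) : Prop :=
  dist2 A B = dist2 B C /\ dist2 B C = dist2 C A.

Definition reflect_line (P Q X : point) : point :=
  let t := dot (psub X P) (psub Q P) / dist2 Q P in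
  psub (pscale 2%:R (padd P (pscale t (psub Q P)))) X.

Definition on_reflected_line (P Q O G X : point) : Prop :=
  collinear (reflect_line P Q O) (reflect_line P Q G) X.

(* X is the Euler reflection point of the non-equilateral triangle ABC:
   the common point of the reflections of the Euler line (line through the
   circumcenter and the centroid) in the three sidelines. *)
Definition euler_reflection_point (A B C X : point) : Prop :=
  [/\ triangle A B C, ~ equilateral A B C &
      forall O, is_circumcenter A B C O ->
        [/\ on_reflected_line B C O (centroid A B C) X,
            on_reflected_line C A O (centroid A B C) X &
            on_reflected_line A B O (centroid A B C) X]].
End Geometry.

From mathcomp Require Import all_boot all_order all_algebra ring.
Import Order.TTheory GRing.Theory Num.Theory.
Local Open Scope ring_scope.
Set Implicit Arguments. Unset Strict Implicit. Unset Printing Implicit Defensive.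

(* The configuration is invariant under direct similarities, so we may take the
   incircle to be the unit circle centred at I = (0, 0), with BC tangent to it at
   (1, 0): B = (1, b) and C = (1, c).  Tangency of CA and AB then forces
   A = ((1 - bc) / (1 + bc), (b + c) / (1 + bc)), every orthocenter and
   circumcenter of the statement has explicit rational coordinates in b and c,
   and both claims become rational identities.  The side lengths of O_AO_BO_C all
   carry the factor (bc + 3)^2 + (b + c)^2, which vanishes only when
   O_A = O_B = O_C; hence it is nonzero as soon as O_AO_BO_C is not equilateral. *)

Section Plane.
Variable R : rcfType.
Implicit Types A B C H O P Q X Y Z W d u v : point R.

Lemma psub0_eq P Q : psub P Q = (0, 0) -> P = Q.
Proof.
case: P Q => [p1 p2] [q1 q2] [/eqP + /eqP] /=.
by rewrite !subr_eq0 => /eqP -> /eqP ->.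
Qed.

Lemma dot_psubl X Y Z u : dot (psub X Y) u = dot (psub X Z) u - dot (psub Y Z) u.
Proof. by rewrite /dot /psub /=; ring. Qed.

Lemma orthogonal2_eq0 d u v :
  dot d u = 0 -> dot d v = 0 -> cross u v != 0 -> d = (0, 0).
Proof.
case: d u v => [d1 d2] [u1 u2] [v1 v2]; rewrite /dot /cross /= => du dv uv.
have d1uv : d1 * (u1 * v2 - u2 * v1) = (d1 * u1 + d2 * u2) * v2 - (d1 * v1 + d2 * v2) * u2.
  by ring.
have d2uv : d2 * (u1 * v2 - u2 * v1) = (d1 * v1 + d2 * v2) * u1 - (d1 * u1 + d2 * u2) * v1.
  by ring.
rewrite du dv !mul0r subrr in d1uv d2uv.
by move/eqP: d1uv; move/eqP: d2uv; rewrite !mulf_eq0 (negbTE uv) !orbF => /eqP-> /eqP->.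
Qed.

Lemma dot_ge0 u : 0 <= dot u u.
Proof. by rewrite /dot -!expr2 addr_ge0 ?sqr_ge0. Qed.

Lemma dist2_eq0 P Q : dist2 P Q = 0 -> P = Q.
Proof.
case: P Q => [p1 p2] [q1 q2]; rewrite /dist2 /dot /psub /= -!expr2 => /eqP.
by rewrite paddr_eq0 ?sqr_ge0 // !sqrf_eq0 !subr_eq0 => /andP[/eqP-> /eqP->].
Qed.

Lemma dist_lineC X P Q : dist_line X P Q = dist_line X Q P.
Proof.
rewrite /dist_line /dist -normrN; congr (`|_| / Num.sqrt _);
  by rewrite /cross /dist2 /dot /psub /=; ring.
Qed.

Lemma dist_line_sqr X P Q :
  dist_line X P Q ^+ 2 = cross (psub Q P) (psub X P) ^+ 2 / dist2 P Q.
Proof.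
by rewrite /dist_line /dist expr_div_n real_normK ?num_real // sqr_sqrtr ?dot_ge0.
Qed.

Lemma triangleP A B C : triangle A B C <-> cross (psub B A) (psub C A) != 0.
Proof. by split=> [/eqP | /eqP]. Qed.

Lemma triangle_dist2_neq0 A B C : triangle A B C ->
  [/\ dist2 C B != 0, dist2 A C != 0 & dist2 B A != 0].
Proof.
move=> ABC; split; apply/eqP => /dist2_eq0 eq_vertices; apply: ABC;
  by rewrite /collinear eq_vertices /cross /psub /=; ring.
Qed.

Lemma strictly_inside_off_sideline A B C X :
  triangle A B C -> strictly_inside X A B C -> ~ collinear B C X.
Proof.
move=> /triangleP ABC [a [b [c [/lt0r_neq0 a_neq0 _ _ abc ->]]]]; apply/eqP.
rewrite (_ : cross _ _ = a * cross (psub B A) (psub C A)) ?mulf_neq0 //.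
have -> : b = 1 - a - c by rewrite -abc; ring.
by rewrite /cross /psub /padd /pscale /=; ring.
Qed.

Lemma orthocenter_unique A B C H H' : triangle A B C ->
  is_orthocenter A B C H -> is_orthocenter A B C H' -> H = H'.
Proof.
move=> /triangleP ABC [altA altB _] [altA' altB' _]; apply/psub0_eq.
apply: (@orthogonal2_eq0 _ (psub C B) (psub A C)).
- by rewrite (dot_psubl _ _ A) altA altA' subrr.
- by rewrite (dot_psubl _ _ B) altB altB' subrr.
- by move: ABC; rewrite /cross /psub /=; congr (_ != 0); ring.
Qed.

Lemma equidistant_dot O P Q :
  dist2 O P = dist2 O Q -> dot (psub O P) (psub Q P) * 2 = dist2 Q P.
Proof.
have -> : dot (psub O P) (psub Q P) * 2 = dist2 O P - dist2 O Q + dist2 Q P.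
  by rewrite /dist2 /dot /psub /=; ring.
by move=> ->; rewrite subrr add0r.
Qed.

Lemma circumcenter_unique A B C O O' : triangle A B C ->
  is_circumcenter A B C O -> is_circumcenter A B C O' -> O = O'.
Proof.
move=> /triangleP ABC [OAB OBC] [O'AB O'BC].
have dot_eq0 X (OX : dist2 O A = dist2 O X) (O'X : dist2 O' A = dist2 O' X) :
    dot (psub O O') (psub X A) = 0.
  apply: (@mulIf _ 2); first by rewrite pnatr_eq0.
  by rewrite mul0r (dot_psubl _ _ A) mulrBl !equidistant_dot // subrr.
apply/psub0_eq/(orthogonal2_eq0 (dot_eq0 B _ _) (dot_eq0 C _ _) ABC) => //.
  exact: etrans OBC.
exact: etrans O'BC.
Qed.
End Plane.

Definition euler_claim (R : rcfType) (A B C I : point R) : Prop :=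
  forall H HA HB HC OA OB OC : point R,
  is_orthocenter A B C H ->
  is_orthocenter B I C HA -> is_orthocenter C I A HB -> is_orthocenter A I B HC ->
  triangle A HB HC -> triangle B HC HA -> triangle C HA HB ->
  is_circumcenter A HB HC OA -> is_circumcenter B HC HA OB ->
  is_circumcenter C HA HB OC ->
  is_orthocenter OA OB OC H /\
  (~ equilateral OA OB OC -> euler_reflection_point OA OB OC I).

Section Similarity.
Variable R : rcfType.
Variables I w : point R.
Hypothesis w_neq0 : dot w w != 0.
Implicit Types A B C H O P Q X Y Z W : point R.

(* The direct similarity of ratio |w| sending I to the origin and the direction of w
   to the positive x-axis. *)
Definition simil X : point R := (dot w (psub X I), cross w (psub X I)).

Lemma simil_center : simil I = (0, 0).
Proof. by rewrite /simil /dot /cross /psub /= !subrr; congr pair; ring. Qed.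

Lemma simil_dot X Y Z W :
  dot (psub (simil X) (simil Y)) (psub (simil Z) (simil W)) =
  dot w w * dot (psub X Y) (psub Z W).
Proof. by rewrite /simil /dot /cross /psub /=; ring. Qed.

Lemma simil_cross X Y Z W :
  cross (psub (simil X) (simil Y)) (psub (simil Z) (simil W)) =
  dot w w * cross (psub X Y) (psub Z W).
Proof. by rewrite /simil /dot /cross /psub /=; ring. Qed.

Lemma simil_dist2 X Y : dist2 (simil X) (simil Y) = dot w w * dist2 X Y.
Proof. exact: simil_dot. Qed.

Lemma simil_dist_line X P Q :
  dist_line (simil X) (simil P) (simil Q) = Num.sqrt (dot w w) * dist_line X P Q.
Proof.
have sqrt_neq0 : Num.sqrt (dot w w) != 0 by rewrite sqrtr_eq0 -ltNge lt0r w_neq0 dot_ge0.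
rewrite /dist_line /dist simil_cross simil_dist2 sqrtrM ?dot_ge0 // invfM.
rewrite normrM ger0_norm ?dot_ge0 // mulrACA; congr (_ * _).
by rewrite -{1}(sqr_sqrtr (dot_ge0 w)) expr2 mulfK.
Qed.

Let scale_eq0 a : dot w w * a = 0 <-> a = 0.
Proof.
split=> [/eqP | ->]; last by rewrite mulr0.
by rewrite mulf_eq0 (negbTE w_neq0) => /eqP.
Qed.

Let scale_inj a b : dot w w * a = dot w w * b <-> a = b.
Proof. by split=> [/(mulfI w_neq0) | ->]. Qed.

Lemma simil_orthocenter A B C H :
  is_orthocenter (simil A) (simil B) (simil C) (simil H) <-> is_orthocenter A B C H.
Proof. by rewrite /is_orthocenter !simil_dot; split=> -[? ? ?]; split; apply/scale_eq0. Qed.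

Lemma simil_circumcenter A B C O :
  is_circumcenter (simil A) (simil B) (simil C) (simil O) <-> is_circumcenter A B C O.
Proof. by rewrite /is_circumcenter !simil_dist2; split=> -[? ?]; split; apply/scale_inj. Qed.

Lemma simil_equilateral A B C :
  equilateral (simil A) (simil B) (simil C) <-> equilateral A B C.
Proof. by rewrite /equilateral !simil_dist2; split=> -[? ?]; split; apply/scale_inj. Qed.

Lemma simil_collinear A B C : collinear (simil A) (simil B) (simil C) <-> collinear A B C.
Proof. by rewrite /collinear simil_cross; apply: scale_eq0. Qed.

Lemma simil_triangle A B C : triangle (simil A) (simil B) (simil C) <-> triangle A B C.
Proof. by split=> ABC /simil_collinear. Qed.

Lemma simil_centroid A B C : simil (centroid A B C) = centroid (simil A) (simil B) (simil C).
Proof. by rewrite /simil /centroid /dot /cross /psub /padd /pscale /=; congr pair; field. Qed.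

Lemma simil_reflect_line P Q X : dist2 Q P != 0 ->
  simil (reflect_line P Q X) = reflect_line (simil P) (simil Q) (simil X).
Proof.
move=> QP; rewrite /reflect_line simil_dot simil_dist2.
rewrite -mulf_div divff // mul1r.
move: (dot (psub X P) (psub Q P) / dist2 Q P) => t.
by rewrite /simil /dot /cross /psub /padd /pscale /=; congr pair; ring.
Qed.

Lemma simil_strictly_inside X A B C :
  strictly_inside X A B C -> strictly_inside (simil X) (simil A) (simil B) (simil C).
Proof.
move=> [a [b [c [a_gt0 b_gt0 c_gt0 abc ->]]]]; exists a, b, c; split=> //.
have -> : c = 1 - a - b by rewrite -abc; ring.
by rewrite /simil /dot /cross /psub /padd /pscale /=; congr pair; ring.
Qed.

Lemma simil_incenter A B C X :
  is_incenter A B C X -> is_incenter (simil A) (simil B) (simil C) (simil X).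
Proof.
move=> [/simil_triangle ABC [/simil_strictly_inside inX [BC_CA CA_AB]]].
by split=> //; split=> //; rewrite !simil_dist_line BC_CA CA_AB.
Qed.

Lemma simil_euler_reflection_point A B C X :
  euler_reflection_point (simil A) (simil B) (simil C) (simil X) ->
  euler_reflection_point A B C X.
Proof.
move=> [/simil_triangle ABC not_equi reflected].
have [CB AC BA] := triangle_dist2_neq0 ABC.
split=> // [/simil_equilateral // | O /(simil_circumcenter A B C O).2 /reflected].
rewrite /on_reflected_line -simil_centroid -!simil_reflect_line //.
by move=> [/simil_collinear ? /simil_collinear ? /simil_collinear ?].
Qed.

Lemma simil_euler_claim A B C X :
  euler_claim (simil A) (simil B) (simil C) (simil X) -> euler_claim A B C X.
Proof.
move=> claim H HA HB HC OA OB OC.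
move=> /simil_orthocenter hH /simil_orthocenter hHA /simil_orthocenter hHB.
move=> /simil_orthocenter hHC /simil_triangle tA /simil_triangle tB /simil_triangle tC.
move=> /simil_circumcenter cA /simil_circumcenter cB /simil_circumcenter cC.
have [/simil_orthocenter ortho euler] := claim _ _ _ _ _ _ _ hH hHA hHB hHC tA tB tC cA cB cC.
split=> // not_equi; apply: simil_euler_reflection_point; apply: euler.
by move/simil_equilateral.
Qed.
End Similarity.

Lemma add1_sqr_neq0 (R : realFieldType) (t : R) : 1 + t ^+ 2 != 0.
Proof. by rewrite lt0r_neq0 // ltr_pwDl ?sqr_ge0. Qed.

Section IncircleFrame.
Variable R : rcfType.
Variables b c : R.

Let B : point R := (1, b).
Let C : point R := (1, c).
Let I : point R := (0, 0).

Definition frame_A : point R := ((1 - b * c) / (1 + b * c), (b + c) / (1 + b * c)).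
Definition frame_H : point R :=
  ((b^+2 * c^+2 - b^+2 + 2 * b * c - c^+2 + 3) / (2 * (1 + b * c)), (b + c) / (1 + b * c)).
Definition frame_HA : point R := (1 + b * c, 0).
Definition frame_HB : point R := ((1 - c^+2) / (1 + b * c), 2 * c / (1 + b * c)).
Definition frame_HC : point R := ((1 - b^+2) / (1 + b * c), 2 * b / (1 + b * c)).
Definition frame_OA : point R :=
  (- (b + c)^+2 / (2 * (1 + b * c)), (b + c) * (1 - b * c) / (2 * (1 + b * c))).
Definition frame_OB : point R :=
  let k := (2 * c - b + b * c^+2) / (2 * (1 + b * c)) in (b * k, - k).
Definition frame_OC : point R :=
  let k := (2 * b - c + b^+2 * c) / (2 * (1 + b * c)) in (c * k, - k).
Definition frame_O : point R :=
  ((b^+2 * c^+2 - b^+2 - c^+2 - 3) / (4 * (1 + b * c)), - (b + c) / 2).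

Hypotheses (b_neq_c : b != c) (b_neq0 : b != 0) (c_neq0 : c != 0).
Hypothesis bc1_neq0 : 1 + b * c != 0.

Lemma frame_orthocenters :
  [/\ is_orthocenter frame_A B C frame_H, is_orthocenter B I C frame_HA,
      is_orthocenter C I frame_A frame_HB, is_orthocenter frame_A I B frame_HC &
      is_orthocenter frame_OA frame_OB frame_OC frame_H].
Proof. by rewrite /is_orthocenter /dot /psub /=; split; split; field. Qed.

Lemma frame_circumcenters :
  [/\ is_circumcenter frame_A frame_HB frame_HC frame_OA,
      is_circumcenter B frame_HC frame_HA frame_OB,
      is_circumcenter C frame_HA frame_HB frame_OC &
      is_circumcenter frame_OA frame_OB frame_OC frame_O].
Proof. by rewrite /is_circumcenter /dist2 /dot /psub /=; split; split; field. Qed.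

Lemma frame_triangles :
  [/\ triangle frame_A B C, triangle B I C, triangle C I frame_A & triangle frame_A I B].
Proof.
split; apply/triangleP; rewrite /cross /psub /=.
- rewrite [X in X != 0](_ : _ = 2 * b * c * (c - b) / (1 + b * c)); last by field.
  by rewrite !mulf_neq0 ?invr_eq0 ?pnatr_eq0 // subr_eq0 eq_sym.
- by rewrite [X in X != 0](_ : _ = b - c) ?subr_eq0 //; ring.
- rewrite [X in X != 0](_ : _ = - b * (1 + c^+2) / (1 + b * c)); last by field.
  by rewrite !mulf_neq0 ?invr_eq0 ?oppr_eq0 ?add1_sqr_neq0.
- rewrite [X in X != 0](_ : _ = c * (1 + b^+2) / (1 + b * c)); last by field.
  by rewrite !mulf_neq0 ?invr_eq0 ?add1_sqr_neq0.
Qed.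

Definition frame_Q : R := (b * c + 3)^+2 + (b + c)^+2.

(* Factored so that the [field] calls below leave only recognisable side conditions. *)
Lemma frame_side_lengths :
  [/\ dist2 frame_OC frame_OB = (b - c)^+2 * frame_Q / (2 * (1 + b * c))^+2,
      dist2 frame_OA frame_OC = b^+2 * (1 + c^+2) * frame_Q / (2 * (1 + b * c))^+2 &
      dist2 frame_OB frame_OA = c^+2 * (1 + b^+2) * frame_Q / (2 * (1 + b * c))^+2].
Proof. by rewrite /frame_Q /dist2 /dot /psub /=; split; field. Qed.

Lemma frame_reflected_lines : frame_Q != 0 ->
  [/\ on_reflected_line frame_OB frame_OC frame_O (centroid frame_OA frame_OB frame_OC) I,
      on_reflected_line frame_OC frame_OA frame_O (centroid frame_OA frame_OB frame_OC) I &
      on_reflected_line frame_OA frame_OB frame_O (centroid frame_OA frame_OB frame_OC) I].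
Proof.
move=> Q_neq0; have [dBC dCA dAB] := frame_side_lengths.
rewrite /on_reflected_line /collinear /reflect_line dBC dCA dAB /frame_Q.
rewrite /centroid /cross /dot /psub /padd /pscale /=.
by split; field; rewrite bc1_neq0 Q_neq0 ?subr_eq0 ?b_neq_c ?add1_sqr_neq0.
Qed.

Lemma frame_Q_neq0 : ~ equilateral frame_OA frame_OB frame_OC -> frame_Q != 0.
Proof.
move=> not_equi; apply/eqP => /eqP; rewrite /frame_Q paddr_eq0 ?sqr_ge0 //.
rewrite !sqrf_eq0 => /andP[/eqP bc3 /eqP bc0]; apply: not_equi.
have kB : 2 * c - b + b * c^+2 = c * (b * c + 3) - (b + c) by ring.
have kC : 2 * b - c + b^+2 * c = b * (b * c + 3) - (b + c) by ring.
rewrite bc3 bc0 mulr0 subrr in kB kC.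
rewrite /equilateral /frame_OA /frame_OB /frame_OC kB kC bc0 /dist2 /dot /psub /=.
by split; ring.
Qed.

Lemma frame_triangle_O : frame_Q != 0 -> triangle frame_OA frame_OB frame_OC.
Proof.
move=> Q_neq0; apply/triangleP; rewrite /cross /psub /=.
rewrite [X in X != 0](_ : _ = (c - b) * b * c * frame_Q / (2 * (1 + b * c))^+2).
  by rewrite !(mulf_neq0, invr_neq0, expf_neq0) // ?pnatr_eq0 // subr_eq0 eq_sym.
by rewrite /frame_Q; field.
Qed.

Lemma frame_euler_claim : euler_claim frame_A B C I.
Proof.
move=> H HA HB HC OA OB OC hH hHA hHB hHC tA tB tC cA cB cC.
have [tABC tBIC tCIA tAIB] := frame_triangles.
have [oH oHA oHB oHC oO] := frame_orthocenters.
rewrite -(orthocenter_unique tABC oH hH).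
rewrite -(orthocenter_unique tBIC oHA hHA) -(orthocenter_unique tCIA oHB hHB)
        -(orthocenter_unique tAIB oHC hHC) in tA tB tC cA cB cC.
have [cOA cOB cOC cO] := frame_circumcenters.
rewrite -(circumcenter_unique tA cOA cA) -(circumcenter_unique tB cOB cB)
        -(circumcenter_unique tC cOC cC).
split=> // not_equi; have Q_neq0 := frame_Q_neq0 not_equi.
have tO := frame_triangle_O Q_neq0; split=> // O cO'.
rewrite -(circumcenter_unique tO cO cO'); exact: frame_reflected_lines.
Qed.
End IncircleFrame.

Section Normalization.
Variable R : rcfType.

Lemma unit_tangent (t x y : R) : x != 1 ->
  dist_line (0, 0) (1, t) (x, y) = 1 -> t ^+ 2 * (x + 1) - 2 * t * y - x + 1 = 0.
Proof.
move=> x_neq1 /(congr1 (fun r => r ^+ 2)); rewrite dist_line_sqr expr1n => /divr1_eq.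
move=> tangent; have : (x - 1) * (t ^+ 2 * (x + 1) - 2 * t * y - x + 1) = 0.
  rewrite -(subrr (dist2 (1, t) (x, y))) -{1}tangent.
  by rewrite /cross /dist2 /dot /psub /=; ring.
by move/eqP; rewrite mulf_eq0 subr_eq0 (negbTE x_neq1) => /eqP.
Qed.

Lemma tangents_meet (b c x y : R) : b != c ->
  b ^+ 2 * (x + 1) - 2 * b * y - x + 1 = 0 ->
  c ^+ 2 * (x + 1) - 2 * c * y - x + 1 = 0 ->
  1 + b * c != 0 /\ (x, y) = frame_A b c.
Proof.
move=> b_neq_c tb tc; have bc_neq0 : b - c != 0 by rewrite subr_eq0.
have ex : (b - c) * (x * (1 + b * c) - (1 - b * c)) =
    c * (b ^+ 2 * (x + 1) - 2 * b * y - x + 1) - b * (c ^+ 2 * (x + 1) - 2 * c * y - x + 1).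
  by ring.
have ey : (b - c) * (2 * y - (b + c) * (x + 1)) =
    (c ^+ 2 * (x + 1) - 2 * c * y - x + 1) - (b ^+ 2 * (x + 1) - 2 * b * y - x + 1).
  by ring.
rewrite tb tc !mulr0 subrr in ex ey.
move/eqP: ex; rewrite mulf_eq0 (negbTE bc_neq0) subr_eq0 => /eqP ex.
move/eqP: ey; rewrite mulf_eq0 (negbTE bc_neq0) subr_eq0 => /eqP ey.
have bc1_neq0 : 1 + b * c != 0.
  have two : 1 - b * c = 2 - (1 + b * c) by ring.
  apply/eqP => bc1; move: ex; rewrite two bc1 mulr0 subr0 => /eqP.
  by rewrite eq_sym pnatr_eq0.
have hx : x = (1 - b * c) / (1 + b * c) by rewrite -ex mulfK.
rewrite hx in ey *; split=> //; congr pair; apply: (@mulIf _ 2); first by rewrite pnatr_eq0.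
by rewrite mulrC ey; field.
Qed.

Lemma incircle_frame_vertex (b c : R) (A : point R) :
  is_incenter A (1, b) (1, c) (0, 0) ->
  [/\ b != c, b != 0, c != 0, 1 + b * c != 0 & A = frame_A b c].
Proof.
case: A => x y [/triangleP ABC [_ [BC_CA CA_AB]]].
have ABC_cross : cross (psub (1, b) (x, y)) (psub (1, c) (x, y)) = (1 - x) * (c - b).
  by rewrite /cross /psub /=; ring.
move: (ABC); rewrite ABC_cross mulf_eq0 negb_or !subr_eq0 eq_sym => /andP[x_neq1 c_neq_b].
have dBC : dist_line (0, 0) (1, b) (1, c) = 1.
  rewrite /dist_line /dist /cross /dist2 /dot /psub /=.
  rewrite (_ : _ - _ = c - b); last by ring.
  rewrite (_ : _ + _ = (c - b) ^+ 2); last by ring.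
  by rewrite sqrtr_sqr divff // normr_eq0 subr_eq0.
have tC : dist_line (0, 0) (1, c) (x, y) = 1 by rewrite -BC_CA.
have tB : dist_line (0, 0) (1, b) (x, y) = 1 by rewrite dist_lineC -CA_AB -BC_CA.
have b_neq_c : b != c by rewrite eq_sym.
have [bc1_neq0 eA] := tangents_meet b_neq_c (unit_tangent x_neq1 tB) (unit_tangent x_neq1 tC).
move: ABC; rewrite eA /cross /psub /=.
rewrite [X in X != 0](_ : _ = 2 * b * c * (c - b) / (1 + b * c)); last by field.
by move=> nz; split=> //; apply: contraNneq nz => ->; rewrite !(mulr0, mul0r).
Qed.

Lemma incircle_frame_euler_claim (b c : R) (A : point R) :
  is_incenter A (1, b) (1, c) (0, 0) -> euler_claim A (1, b) (1, c) (0, 0).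
Proof.
by case/incircle_frame_vertex => b_neq_c b_neq0 c_neq0 bc1_neq0 ->; apply: frame_euler_claim.
Qed.

Lemma normalizing_simil (B C I : point R) : ~ collinear B C I ->
  exists w b c, [/\ dot w w != 0, simil I w B = (1, b) & simil I w C = (1, c)].
Proof.
rewrite /collinear => /eqP BCI.
(* A normal to BC, scaled so that simil I w maps the line BC to x = 1. *)
pose w := pscale (cross (psub C B) (psub I B))^-1 ((psub C B).2, - (psub C B).1).
have w_neq0 : dot w w != 0.
  rewrite (_ : dot w w = dist2 C B / cross (psub C B) (psub I B) ^+ 2); last first.
    by rewrite /w /dist2 /dot /pscale /psub /=; field; move: BCI.
  rewrite mulf_neq0 ?invr_eq0 ?expf_neq0 //; apply: contra BCI => /eqP /dist2_eq0 ->.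
  by rewrite /cross /psub /= !subrr; apply/eqP; ring.
exists w, (simil I w B).2, (simil I w C).2; split=> //;
  rewrite [LHS]surjective_pairing; congr pair; move: BCI;
  by rewrite /simil /w /cross /dot /pscale /psub /= => BCI; field.
Qed.
End Normalization.

Theorem corollary5p4 (R : rcfType) (A B C I H HA HB HC OA OB OC : point R) :
  is_incenter A B C I ->
  is_orthocenter A B C H ->
  is_orthocenter B I C HA ->
  is_orthocenter C I A HB ->
  is_orthocenter A I B HC ->
  triangle A HB HC -> triangle B HC HA -> triangle C HA HB ->
  is_circumcenter A HB HC OA ->
  is_circumcenter B HC HA OB ->
  is_circumcenter C HA HB OC ->
  is_orthocenter OA OB OC H /\
  (~ equilateral OA OB OC -> euler_reflection_point OA OB OC I).
Proof.
move=> incI; have [ABC [insideI _]] := incI.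
have [w [b [c [w_neq0 wB wC]]]] := normalizing_simil (strictly_inside_off_sideline ABC insideI).
have claim : euler_claim A B C I.
  apply: (simil_euler_claim (I := I) w_neq0); rewrite wB wC simil_center.
  apply: incircle_frame_euler_claim; rewrite -wB -wC -(simil_center I w).
  exact: simil_incenter.
exact: claim.
Qed.
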